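(* Let $n$ be a positive even integer and $m$ a positive integer. Then $$\sum_{k=1}^\infty\frac{F_n^{2k}5^k\binom{2k}{2m}}{L_n^{2k}(2k-1)(2k)(2k+1)}=\frac{L_n}{4F_n}\sum_{j=0}^{m-1}\frac{5^{m-j}}{2m-2j}\frac{F_n^{2m-2j}}{2^{2m-2j}}F_{n(2m-2j)}-\frac{L_n}{4F_n}\sum_{j=1}^{m}\frac{5^{m-j}}{2m-2j+1}\frac{F_n^{2m-2j+1}}{2^{2m-2j+1}}L_{n(2m-2j+1)}$$ $$-\frac{5^m}{m}\frac{F_n^{2m}}{2^{2m+2}}L_{2nm}+\frac1{L_n}\frac{5^{m+1}}{m}\frac{F_n^{2m+1}}{2^{2m+3}}F_{2nm}+\frac1{L_n}\frac{5^m}{2m-1}\frac{F_n^{2m}}{2^{2m+1}}L_{n(2m-1)}+\frac{nL_n}{2F_n\sqrt5}\ln\alpha,$$ and $$\sum_{k=1}^\infty\frac{F_n^{2k}5^k\binom{2k}{2m+1}}{L_n^{2k}(2k-1)(2k)(2k+1)}=\frac{L_n}{4F_n}\sum_{j=0}^{m}\frac{5^{m-j}}{2m-2j+1}\frac{F_n^{2m-2j+1}}{2^{2m-2j+1}}L_{n(2m-2j+1)}-\frac{L_n}{4F_n}\sum_{j=1}^{m}\frac{5^{m-j+1}}{2m-2j+2}\frac{F_n^{2m-2j+2}}{2^{2m-2j+2}}F_{n(2m-2j+2)}$$ $$-\frac{5^{m+1}}{2m+1}\frac{F_n^{2m+1}}{2^{2m+2}}F_{n(2m+1)}+\frac1{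L_n}\frac{5^{m+1}}{2m+1}\frac{F_n^{2m+2}}{2^{2m+3}}L_{n(2m+1)}+\frac1{L_n}\frac{5^{m+1}}{m}\frac{F_n^{2m+1}}{2^{2m+3}}F_{2mn}-\frac{nL_n}{2F_n\sqrt5}\ln\alpha.$$
   Context: $F_n=(\alpha^n-\beta^n)/(\alpha-\beta)$ and $L_n=\alpha^n+\beta^n$ are the Fibonacci and Lucas numbers, with $\alpha=(1+\sqrt5)/2$, $\beta=(1-\sqrt5)/2$. *)

From Stdlib Require Import Reals Lra Lia Arith.
From Coquelicot Require Import Coquelicot.
Open Scope R_scope.

Definition alpha : R := (1 + sqrt 5) / 2.
Definition beta : R := (1 - sqrt 5) / 2.

Definition Fib (n : nat) : R := (alpha ^ n - beta ^ n) / (alpha - beta).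
Definition Luc (n : nat) : R := alpha ^ n + beta ^ n.

Fixpoint binom (n k : nat) : nat :=
  match n, k with
  | _, O => 1%nat
  | O, S _ => 0%nat
  | S n', S k' => (binom n' k' + binom n' (S k'))%nat
  end.

(* General term of the series, for k >= 1, with binomial index r. *)
Definition term (n r k : nat) : R :=
  Fib n ^ (2 * k) * 5 ^ k * INR (binom (2 * k) r)
  / (Luc n ^ (2 * k) * ((2 * INR k - 1) * (2 * INR k) * (2 * INR k + 1))).

(* Put x = sqrt 5 F_n / L_n; for even n this is (alpha^n - beta^n) / (alpha^n + beta^n) = tanh (n ln alpha),
   so 1 - x = 2 beta^n / L_n, 1 + x = 2 alpha^n / L_n and atanh x = n ln alpha.  The k-th term of the series is
   C(2k, r) x^(2k) / ((2k-1) 2k (2k+1)).  Splitting 1 / ((N-1) N (N+1)) = (1/(N-1) - 2/N + 1/(N+1)) / 2 and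
   absorbing the denominators N - 1 and N into the binomial coefficient reduces the first two parts to the even
   and odd parts of the generating functions sum_j C(j, s) x^j = x^s / (1 - x)^(s+1).  The part C(N, r) / (N+1)
   does not absorb: it equals an alternating sum of C(N, j) / (j + 1), j < r, plus (-1)^r / (N+1), and the
   latter sums to atanh x, which is where the logarithm comes from.  Evaluating the generating functions at
   x = tanh (n ln alpha) turns every piece into Fibonacci and Lucas numbers. *)

From Stdlib Require Import Reals Lra Lia Arith.
From Coquelicot Require Import Coquelicot.
Open Scope R_scope.

Lemma is_series_plus_R (a b : nat -> R) (la lb : R) :
  is_series a la -> is_series b lb -> is_series (fun k => a k + b k) (la + lb).
Proof. intros Ha Hb. exact (is_series_plus _ _ _ _ Ha Hb). Qed.

Lemma is_series_minus_R (a b : nat -> R) (la lb : R) :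
  is_series a la -> is_series b lb -> is_series (fun k => a k - b k) (la - lb).
Proof. intros Ha Hb. exact (is_series_minus _ _ _ _ Ha Hb). Qed.

Lemma is_series_scal_R (c : R) (a : nat -> R) (la : R) :
  is_series a la -> is_series (fun k => c * a k) (c * la).
Proof. intros Ha. exact (is_series_scal_l _ _ _ Ha). Qed.

Lemma is_series_ext_val (a b : nat -> R) (la lb : R) :
  (forall k, a k = b k) -> la = lb -> is_series a la -> is_series b lb.
Proof. intros Hab <-. now apply is_series_ext. Qed.

Lemma is_series_tail (a : nat -> R) (l : R) :
  is_series a l -> is_series (fun k => a (S k)) (l - a 0%nat).
Proof. intros H. apply is_series_incr_1. unfold plus; simpl. now replace (l - a 0%nat + a 0%nat) with l by ring. Qed.

Lemma is_series_of_tail (a : nat -> R) (l : R) :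
  is_series (fun k => a (S k)) (l - a 0%nat) -> is_series a l.
Proof. intros H. apply is_series_decr_1. exact H. Qed.

Lemma is_series_even_terms (a : nat -> R) (l : R) :
  (forall k, a (2 * k + 1)%nat = 0) -> is_series a l -> is_series (fun k => a (2 * k)%nat) l.
Proof.
  intros Hodd Ha.
  assert (Hsub : filterlim (fun k => (2 * k)%nat) eventually eventually).
  { intros P [N HN]. exists N. intros k Hk. apply HN. lia. }
  change (is_lim_seq (sum_n (fun k => a (2 * k)%nat)) l).
  eapply is_lim_seq_ext; [|exact (is_lim_seq_subseq _ _ _ Hsub (Ha : is_lim_seq (sum_n a) l))].
  intros N; induction N as [|N IH]; [now rewrite !sum_O|].
  replace (2 * S N)%nat with (S (S (2 * N))) by lia.
  rewrite (sum_Sn (fun k => a (2 * k)%nat)), <- IH, !sum_Sn.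
  replace (S (2 * N)) with (2 * N + 1)%nat by lia.
  rewrite Hodd. unfold plus; simpl. rewrite Rplus_0_r. do 2 f_equal. lia.
Qed.

Lemma is_series_odd_terms (a : nat -> R) (l : R) :
  (forall k, a (2 * k)%nat = 0) -> is_series a l -> is_series (fun k => a (2 * k + 1)%nat) l.
Proof.
  intros Heven Ha. apply is_series_tail in Ha. rewrite (Heven 0%nat : a 0%nat = 0), Rminus_0_r in Ha.
  apply is_series_even_terms in Ha.
  - eapply is_series_ext; [|exact Ha]. intros k. now rewrite Nat.add_1_r.
  - intros k. rewrite <- (Heven (S k)). f_equal. lia.
Qed.

Lemma sum_n_m_reindex (f g : nat -> R) a b c :
  (a + c = b)%nat -> (forall j, (a <= j <= b)%nat -> f j = g (b - j)%nat) ->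
  sum_n_m f a b = sum_n_m g 0 c.
Proof.
  revert a; induction c as [|c IH]; intros a <- Hfg.
  - rewrite Nat.add_0_r in *. rewrite !sum_n_n, Hfg by lia. f_equal. lia.
  - rewrite sum_Sn_m, sum_n_Sm by lia.
    rewrite (IH (S a)); [|lia|intros j Hj; apply Hfg; lia].
    rewrite (Hfg a) by lia. replace (a + S c - a)%nat with (S c) by lia. apply Rplus_comm.
Qed.

Lemma pow_opp_even x k : (- x) ^ (2 * k) = x ^ (2 * k).
Proof. rewrite !pow_mult. f_equal. ring. Qed.

Lemma pow_opp_odd x k : (- x) ^ (2 * k + 1) = - x ^ (2 * k + 1).
Proof. rewrite !pow_add, pow_opp_even. ring. Qed.

Lemma pow_m1_even k : (-1) ^ (2 * k) = 1.
Proof. rewrite pow_mult. replace ((-1) ^ 2) with 1 by ring. apply pow1. Qed.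

Lemma Rpow_div_distr x y k : (x / y) ^ k = x ^ k / y ^ k.
Proof. unfold Rdiv. now rewrite Rpow_mult_distr, pow_inv. Qed.

Lemma binom_n_0 n : binom n 0 = 1%nat.
Proof. now destruct n. Qed.

Lemma binom_absorption n k : (binom (S n) (S k) * S k = S n * binom n k)%nat.
Proof.
  revert k; induction n as [|n IH]; intros [|k].
  - reflexivity.
  - simpl; lia.
  - pose proof (IH 0%nat). cbn [binom] in *. rewrite binom_n_0 in *. lia.
  - pose proof (IH k). pose proof (IH (S k)). cbn [binom] in *. nia.
Qed.

Lemma INR_binom_absorption n k :
  INR (binom (S n) (S k)) * INR (S k) = INR (S n) * INR (binom n k).
Proof. rewrite <- !mult_INR. f_equal. apply binom_absorption. Qed.

Lemma sum_binom_upper n s : sum_n (fun k => INR (binom k s)) n = INR (binom (S n) (S s)).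
Proof.
  induction n as [|n IH].
  - rewrite sum_O. cbn [binom]. rewrite Nat.add_0_r. reflexivity.
  - rewrite sum_Sn, IH. change (binom (S (S n)) (S s)) with (binom (S n) s + binom (S n) (S s))%nat.
    rewrite plus_INR. apply Rplus_comm.
Qed.

Definition binom_gf (s : nat) (x : R) : R := x ^ s / (1 - x) ^ S s.

Lemma is_series_binom_gf s x :
  Rabs x < 1 -> is_series (fun j => INR (binom j s) * x ^ j) (binom_gf s x).
Proof.
  revert x; induction s as [|s IH]; intros x Hx;
    assert (Hx1 : 1 - x <> 0) by (apply Rabs_lt_between in Hx; lra).
  - replace (binom_gf 0 x) with (/ (1 - x)) by (unfold binom_gf; simpl; field; auto).
    apply (is_series_ext (fun j => x ^ j)); [|now apply is_series_geom].
    intros j; rewrite binom_n_0; simpl; ring.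
  - (* Cauchy product with the geometric series, by the hockey-stick identity *)
    assert (Habs : Rabs (Rabs x) < 1) by now rewrite Rabs_Rabsolu.
    assert (Hbin : ex_series (fun j => Rabs (INR (binom j s) * x ^ j))).
    { eexists; eapply is_series_ext; [|apply (IH _ Habs)]. intros j.
      now rewrite Rabs_mult, <- RPow_abs, (Rabs_pos_eq (INR _)) by apply pos_INR. }
    assert (Hgeom : ex_series (fun j => Rabs (x ^ j))).
    { eexists; eapply is_series_ext; [|apply (is_series_geom _ Habs)]. intros j; apply RPow_abs. }
    assert (Hprod := is_series_mult _ _ _ _ (IH x Hx) (is_series_geom x Hx) Hbin Hgeom).
    apply is_series_of_tail.
    eapply is_series_ext_val; [| |exact (is_series_scal_R x _ _ Hprod)].
    + intros j. cbv beta. rewrite <- sum_binom_upper, sum_n_Reals, (Rmult_comm (sum_f_R0 _ _)), !scal_sum.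
      apply sum_eq. intros k Hk.
      replace (x ^ S j) with (x * (x ^ k * x ^ (j - k))) by (rewrite <- pow_add, <- tech_pow_Rmult; do 2 f_equal; lia).
      ring.
    + unfold binom_gf. simpl. field. split; [apply pow_nonzero|]; auto.
Qed.

Definition binom_gf_even s x := (binom_gf s x + binom_gf s (- x)) / 2.
Definition binom_gf_odd s x := (binom_gf s x - binom_gf s (- x)) / 2.

Lemma is_series_binom_gf_even s x : Rabs x < 1 ->
  is_series (fun k => INR (binom (2 * k) s) * x ^ (2 * k)) (binom_gf_even s x).
Proof.
  intros Hx. assert (Hx' : Rabs (- x) < 1) by now rewrite Rabs_Ropp.
  assert (H := is_series_scal_R (/ 2) _ _
    (is_series_plus_R _ _ _ _ (is_series_binom_gf s x Hx) (is_series_binom_gf s (- x) Hx'))).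
  apply is_series_even_terms in H.
  - eapply is_series_ext_val; [| |exact H].
    + intros k. cbv beta. rewrite pow_opp_even. field.
    + unfold binom_gf_even. field.
  - intros k; cbv beta. rewrite pow_opp_odd. ring.
Qed.

Lemma is_series_binom_gf_odd s x : Rabs x < 1 ->
  is_series (fun k => INR (binom (2 * k + 1) s) * x ^ (2 * k + 1)) (binom_gf_odd s x).
Proof.
  intros Hx. assert (Hx' : Rabs (- x) < 1) by now rewrite Rabs_Ropp.
  assert (H := is_series_scal_R (/ 2) _ _
    (is_series_minus_R _ _ _ _ (is_series_binom_gf s x Hx) (is_series_binom_gf s (- x) Hx'))).
  apply is_series_odd_terms in H.
  - eapply is_series_ext_val; [| |exact H].
    + intros k. cbv beta. rewrite pow_opp_odd. field.
    + unfold binom_gf_odd. field.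
  - intros k; cbv beta. rewrite pow_opp_even. ring.
Qed.

Definition atanh (x : R) : R := ln ((1 + x) / (1 - x)) / 2.

Lemma is_derive_atanh t : -1 < t < 1 -> is_derive atanh t (/ (1 - t ^ 2)).
Proof.
  intros Ht. unfold atanh. auto_derive.
  - repeat split; try lra. apply Rdiv_lt_0_compat; lra.
  - field. repeat split; try lra. nra.
Qed.

Definition atanh_partial_sum (N : nat) (t : R) : R := sum_n (fun k => t ^ (2 * k + 1) / INR (2 * k + 1)) N.

Lemma is_derive_odd_power_div k t :
  is_derive (fun u => u ^ (2 * k + 1) / INR (2 * k + 1)) t (t ^ (2 * k)).
Proof.
  assert (INR (2 * k + 1) <> 0) by (apply not_0_INR; lia).
  auto_derive; auto. replace (Init.Nat.pred (k + (k + 0) + 1)) with (2 * k)%nat by lia.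
  change (k + (k + 0) + 1)%nat with (2 * k + 1)%nat. field; auto.
Qed.

Lemma is_derive_atanh_partial_sum N t :
  is_derive (atanh_partial_sum N) t (sum_n (fun k => t ^ (2 * k)) N).
Proof.
  induction N as [|N IH].
  - rewrite sum_O. eapply is_derive_ext; [|apply is_derive_odd_power_div].
    intros u. unfold atanh_partial_sum. now rewrite sum_O.
  - rewrite sum_Sn. eapply is_derive_ext; [|apply (is_derive_plus _ _ _ _ _ IH (is_derive_odd_power_div (S N) t))].
    intros u. unfold atanh_partial_sum. now rewrite sum_Sn.
Qed.

Lemma geometric_sum_sq N t : sum_n (fun k => t ^ (2 * k)) N * (1 - t ^ 2) = 1 - t ^ (2 * N + 2).
Proof.
  induction N as [|N IH].
  - rewrite sum_O. simpl. ring.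
  - rewrite sum_Sn. change (plus ?a ?b) with (a + b). rewrite Rmult_plus_distr_r, IH.
    replace (2 * N + 2)%nat with (2 * S N)%nat by lia. rewrite pow_add. simpl. ring.
Qed.

Lemma atanh_partial_sum_0 N : atanh_partial_sum N 0 = 0.
Proof.
  unfold atanh_partial_sum. induction N as [|N IH]; [rewrite sum_O | rewrite sum_Sn, IH];
    rewrite pow_i by lia; unfold Rdiv; rewrite Rmult_0_l; [reflexivity|]. apply Rplus_0_r.
Qed.

Lemma atanh_remainder_bound N x : 0 <= x < 1 ->
  0 <= atanh x - atanh_partial_sum N x <= x ^ 3 / (1 - x ^ 2) * (x ^ 2) ^ N.
Proof.
  intros Hx.
  set (D := fun t => atanh t - atanh_partial_sum N t).
  set (dD := fun t => t ^ (2 * N + 2) / (1 - t ^ 2)).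
  assert (HD : forall t, -1 < t < 1 -> is_derive D t (dD t)).
  { intros t Ht. replace (dD t) with (/ (1 - t ^ 2) - sum_n (fun k => t ^ (2 * k)) N).
    - exact (is_derive_minus _ _ _ _ _ (is_derive_atanh t Ht) (is_derive_atanh_partial_sum N t)).
    - unfold dD. assert (1 - t ^ 2 <> 0) by nra.
      replace (t ^ (2 * N + 2)) with (1 - sum_n (fun k => t ^ (2 * k)) N * (1 - t ^ 2))
        by (rewrite geometric_sum_sq; ring).
      field. auto. }
  destruct (MVT_gen D 0 x dD) as [c [Hc Heq]]; rewrite Rmin_left, Rmax_right in * by lra.
  - intros t Ht. apply HD. lra.
  - intros t Ht. apply continuity_pt_filterlim.
    apply (ex_derive_continuous (K := R_AbsRing) (V := R_NormedModule)). eexists; apply HD; lra.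
  - assert (HD0 : D 0 = 0).
    { unfold D, atanh. rewrite atanh_partial_sum_0. replace ((1 + 0) / (1 - 0)) with 1 by field.
      rewrite ln_1. field. }
    fold (D x). rewrite HD0, !Rminus_0_r in Heq. rewrite Heq. unfold dD.
    replace (x ^ 3 / (1 - x ^ 2) * (x ^ 2) ^ N) with (x ^ (2 * N + 2) / (1 - x ^ 2) * x)
      by (rewrite <- pow_mult, (Nat.mul_comm 2 N), pow_add; simpl; field; nra).
    assert (c ^ (2 * N + 2) <= x ^ (2 * N + 2)) by (apply pow_incr; lra).
    assert (0 <= c ^ (2 * N + 2)) by (apply pow_le; lra).
    assert (/ (1 - c ^ 2) <= / (1 - x ^ 2)) by (apply Rinv_le_contravar; nra).
    assert (0 < / (1 - c ^ 2)) by (apply Rinv_0_lt_compat; nra).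
    unfold Rdiv. split; [apply Rmult_le_pos|apply Rmult_le_compat_r]; try nra.
Qed.

Lemma is_series_atanh x : 0 <= x < 1 -> is_series (fun k => x ^ (2 * k + 1) / INR (2 * k + 1)) (atanh x).
Proof.
  intros Hx. change (is_lim_seq (fun N => atanh_partial_sum N x) (atanh x)).
  apply (is_lim_seq_le_le (fun N => atanh x - x ^ 3 / (1 - x ^ 2) * (x ^ 2) ^ N) _ (fun _ => atanh x)).
  - intros N. pose proof (atanh_remainder_bound N x Hx). lra.
  - replace (Finite (atanh x)) with (Finite (atanh x - x ^ 3 / (1 - x ^ 2) * 0)) by (f_equal; ring).
    apply is_lim_seq_minus'; [apply is_lim_seq_const|].
    apply (is_lim_seq_scal_l _ _ 0), is_lim_seq_geom. rewrite Rabs_pos_eq; nra.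
  - apply is_lim_seq_const.
Qed.

(* Closed form of sum_(j < r) (-1)^(r-1-j) C(N, j) / (j + 1), as [alt_binom_succ] shows. *)
Definition alt_binom (N r : nat) : R := (INR (binom N r) - (-1) ^ r) / (INR N + 1).

Lemma alt_binom_0 N : alt_binom N 0 = 0.
Proof. unfold alt_binom. rewrite binom_n_0. simpl. unfold Rdiv. ring. Qed.

Lemma alt_binom_succ N r : alt_binom N (S r) = INR (binom N r) / INR (S r) - alt_binom N r.
Proof.
  assert (H := INR_binom_absorption N r). cbn [binom] in H. rewrite plus_INR, !S_INR in H.
  assert (0 <= INR N) by apply pos_INR. assert (0 <= INR r) by apply pos_INR.
  unfold alt_binom. rewrite S_INR. simpl pow.
  apply (Rmult_eq_reg_r ((INR N + 1) * (INR r + 1))); [|nra].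
  field_simplify; [|lra|lra]. nra.
Qed.

Lemma alt_binom_add2 N r : alt_binom N (r + 2) =
  INR (binom N (r + 1)) / INR (r + 2) - INR (binom N r) / INR (r + 1) + alt_binom N r.
Proof.
  replace (r + 2)%nat with (S (S r)) by lia. replace (r + 1)%nat with (S r) by lia.
  rewrite !alt_binom_succ. ring.
Qed.

Definition alt_binom_gf (q : nat) (x : R) : R :=
  sum_n (fun t => binom_gf_even (2 * t + 1) x / INR (2 * t + 2) - binom_gf_even (2 * t) x / INR (2 * t + 1)) q.

Lemma is_series_alt_binom_even q x : Rabs x < 1 ->
  is_series (fun k => x ^ (2 * k) * alt_binom (2 * k) (2 * q + 2)) (alt_binom_gf q x).
Proof.
  intros Hx.
  assert (Hstep : forall t, is_series
    (fun k => x ^ (2 * k) * (INR (binom (2 * k) (2 * t + 1)) / INR (2 * t + 2)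
                             - INR (binom (2 * k) (2 * t)) / INR (2 * t + 1)))
    (binom_gf_even (2 * t + 1) x / INR (2 * t + 2) - binom_gf_even (2 * t) x / INR (2 * t + 1))).
  { intros t. eapply is_series_ext_val; [| |exact (is_series_minus_R _ _ _ _
        (is_series_scal_R (/ INR (2 * t + 2)) _ _ (is_series_binom_gf_even (2 * t + 1) x Hx))
        (is_series_scal_R (/ INR (2 * t + 1)) _ _ (is_series_binom_gf_even (2 * t) x Hx)))].
    - intros k. unfold Rdiv. ring.
    - unfold Rdiv. ring. }
  unfold alt_binom_gf. induction q as [|q IH].
  - rewrite sum_O. eapply is_series_ext; [|apply (Hstep 0%nat)]. intros k.
    rewrite (alt_binom_add2 _ (2 * 0)), alt_binom_0, Rplus_0_r. reflexivity.
  - rewrite sum_Sn. eapply is_series_ext_val; [| |exact (is_series_plus_R _ _ _ _ IH (Hstep (S q)))].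
    + intros k. rewrite (alt_binom_add2 _ (2 * S q)), !Nat.mul_succ_r. ring.
    + reflexivity.
Qed.

Lemma binom_partial_fractions N p :
  INR (binom (N + 2) (p + 2)) / (INR (N + 1) * INR (N + 2) * INR (N + 3)) =
  / 2 * (INR (binom N (p + 1)) / INR (p + 2) + INR (binom N p) / INR (p + 1)
         - 2 * INR (binom (N + 1) (p + 1)) / INR (p + 2)
         + alt_binom (N + 2) (p + 2) + (-1) ^ p / INR (N + 3)).
Proof.
  assert (Habs2 := INR_binom_absorption (N + 1) (p + 1)).
  assert (Habs1 := INR_binom_absorption N (p + 1)).
  assert (Habs0 := INR_binom_absorption N p).
  replace (S (N + 1)) with (N + 2)%nat in Habs2 by lia.
  replace (S (p + 1)) with (p + 2)%nat in Habs1, Habs2 by lia.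
  replace (S N) with (N + 1)%nat in Habs0, Habs1 by lia.
  replace (S p) with (p + 1)%nat in Habs0 by lia.
  assert (Hpascal : INR (binom (N + 2) (p + 2)) = INR (binom (N + 1) (p + 1)) + INR (binom (N + 1) (p + 2))).
  { replace (N + 2)%nat with (S (N + 1)) by lia. replace (p + 2)%nat with (S (p + 1)) by lia.
    now rewrite <- plus_INR. }
  unfold alt_binom. rewrite !plus_INR in *.
  replace (INR 1) with 1 in * by reflexivity.
  replace (INR 2) with 2 in * by (simpl; ring). replace (INR 3) with 3 in * by (simpl; ring).
  replace ((-1) ^ (p + 2)) with ((-1) ^ p) by (rewrite pow_add; simpl; ring).
  assert (0 <= INR N) by apply pos_INR. assert (0 <= INR p) by apply pos_INR.
  set (c := INR (binom (N + 2) (p + 2))) in *.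
  set (b11 := INR (binom (N + 1) (p + 1))) in *.
  set (b12 := INR (binom (N + 1) (p + 2))) in *.
  set (b01 := INR (binom N (p + 1))) in *.
  set (b00 := INR (binom N p)) in *.
  assert (Eb11 : b11 = c * (INR p + 2) / (INR N + 2))
    by (apply (Rmult_eq_reg_l (INR N + 2)); [rewrite <- Habs2; field|]; lra).
  assert (Eb01 : b01 = b12 * (INR p + 2) / (INR N + 1))
    by (apply (Rmult_eq_reg_l (INR N + 1)); [rewrite Habs1; field|]; lra).
  assert (Eb00 : b00 = b11 * (INR p + 1) / (INR N + 1))
    by (apply (Rmult_eq_reg_l (INR N + 1)); [rewrite Habs0; field|]; lra).
  assert (Eb12 : b12 = c - b11) by lra.
  rewrite Eb00, Eb01, Eb12, Eb11. field. lra.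
Qed.

Definition shifted_term (x : R) (p k : nat) : R :=
  x ^ (2 * k + 2) * (INR (binom (2 * k + 2) (p + 2)) / (INR (2 * k + 1) * INR (2 * k + 2) * INR (2 * k + 3))).

Lemma is_series_shifted_term p x l : 0 < x < 1 ->
  is_series (fun k => x ^ (2 * k + 2) * alt_binom (2 * k + 2) (p + 2)) l ->
  is_series (shifted_term x p)
    (/ 2 * (x ^ 2 * binom_gf_even (p + 1) x / INR (p + 2) + x ^ 2 * binom_gf_even p x / INR (p + 1)
            - 2 * x * binom_gf_odd (p + 1) x / INR (p + 2) + l + (-1) ^ p * ((atanh x - x) / x))).
Proof.
  intros Hx Halt. assert (Hx1 : Rabs x < 1) by (rewrite Rabs_pos_eq; lra).
  assert (Hatanh := is_series_tail _ _ (is_series_atanh x ltac:(lra))).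
  assert (Hsum := is_series_scal_R (/ 2) _ _ (is_series_plus_R _ _ _ _
    (is_series_plus_R _ _ _ _
      (is_series_minus_R _ _ _ _
        (is_series_plus_R _ _ _ _
          (is_series_scal_R (x ^ 2 / INR (p + 2)) _ _ (is_series_binom_gf_even (p + 1) x Hx1))
          (is_series_scal_R (x ^ 2 / INR (p + 1)) _ _ (is_series_binom_gf_even p x Hx1)))
        (is_series_scal_R (2 * x / INR (p + 2)) _ _ (is_series_binom_gf_odd (p + 1) x Hx1)))
      Halt)
    (is_series_scal_R ((-1) ^ p / x) _ _ Hatanh))).
  eapply is_series_ext_val; [| |exact Hsum].
  - intros k. unfold shifted_term. rewrite binom_partial_fractions.
    replace (2 * S k + 1)%nat with (2 * k + 3)%nat by lia.
    rewrite !pow_add.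
    assert (INR (p + 1) <> 0) by (apply not_0_INR; lia).
    assert (INR (p + 2) <> 0) by (apply not_0_INR; lia).
    assert (INR (2 * k + 3) <> 0) by (apply not_0_INR; lia).
    field. repeat split; auto; lra.
  - cbv beta. replace (x ^ (2 * 0 + 1) / INR (2 * 0 + 1)) with x by (simpl; field).
    assert (INR (p + 1) <> 0) by (apply not_0_INR; lia).
    assert (INR (p + 2) <> 0) by (apply not_0_INR; lia).
    field. repeat split; auto; lra.
Qed.

Lemma is_series_alt_binom_even_shifted q x : Rabs x < 1 ->
  is_series (fun k => x ^ (2 * k + 2) * alt_binom (2 * k + 2) (2 * q + 2)) (alt_binom_gf q x + 1).
Proof.
  intros Hx. eapply is_series_ext_val; [| |exact (is_series_tail _ _ (is_series_alt_binom_even q x Hx))].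
  - intros k. cbv beta. now replace (2 * S k)%nat with (2 * k + 2)%nat by lia.
  - cbv beta. replace (alt_binom (2 * 0) (2 * q + 2)) with (-1); [simpl; ring|].
    unfold alt_binom. rewrite pow_add, pow_m1_even.
    replace (binom (2 * 0) (2 * q + 2)) with 0%nat by now replace (2 * q + 2)%nat with (S (2 * q + 1)) by lia.
    simpl. field.
Qed.

Lemma is_series_shifted_term_even q x : 0 < x < 1 ->
  is_series (shifted_term x (2 * q))
    (/ 2 * (x ^ 2 * binom_gf_even (2 * q + 1) x / INR (2 * q + 2) + x ^ 2 * binom_gf_even (2 * q) x / INR (2 * q + 1)
            - 2 * x * binom_gf_odd (2 * q + 1) x / INR (2 * q + 2) + (alt_binom_gf q x + 1) + (atanh x - x) / x)).
Proof.
  intros Hx. assert (Hx1 : Rabs x < 1) by (rewrite Rabs_pos_eq; lra).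
  eapply is_series_ext_val;
    [reflexivity| |exact (is_series_shifted_term _ _ _ Hx (is_series_alt_binom_even_shifted q x Hx1))].
  rewrite pow_m1_even. ring.
Qed.

Lemma is_series_alt_binom_odd_shifted q x : Rabs x < 1 ->
  is_series (fun k => x ^ (2 * k + 2) * alt_binom (2 * k + 2) (2 * q + 3))
    (binom_gf_even (2 * q + 2) x / INR (2 * q + 3) - (alt_binom_gf q x + 1)).
Proof.
  intros Hx. assert (Hbin := is_series_tail _ _ (is_series_binom_gf_even (2 * q + 2) x Hx)).
  eapply is_series_ext_val; [| |exact (is_series_minus_R _ _ _ _
    (is_series_scal_R (/ INR (2 * q + 3)) _ _ Hbin) (is_series_alt_binom_even_shifted q x Hx))].
  - intros k. cbv beta. replace (2 * S k)%nat with (2 * k + 2)%nat by lia.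
    replace (2 * q + 3)%nat with (S (2 * q + 2)) by lia. rewrite alt_binom_succ. unfold Rdiv. ring.
  - cbv beta. replace (binom (2 * 0) (2 * q + 2)) with 0%nat by now replace (2 * q + 2)%nat with (S (2 * q + 1)) by lia.
    simpl. unfold Rdiv. ring.
Qed.

Lemma is_series_shifted_term_odd q x : 0 < x < 1 ->
  is_series (shifted_term x (2 * q + 1))
    (/ 2 * (x ^ 2 * binom_gf_even (2 * q + 2) x / INR (2 * q + 3) + x ^ 2 * binom_gf_even (2 * q + 1) x / INR (2 * q + 2)
            - 2 * x * binom_gf_odd (2 * q + 2) x / INR (2 * q + 3)
            + (binom_gf_even (2 * q + 2) x / INR (2 * q + 3) - (alt_binom_gf q x + 1)) - (atanh x - x) / x)).
Proof.
  intros Hx. assert (Halt := is_series_alt_binom_odd_shifted q x ltac:(rewrite Rabs_pos_eq; lra)).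
  replace (2 * q + 3)%nat with (2 * q + 1 + 2)%nat in Halt by lia.
  eapply is_series_ext_val; [reflexivity| |exact (is_series_shifted_term _ _ _ Hx Halt)].
  replace (2 * q + 1 + 1)%nat with (2 * q + 2)%nat by lia.
  replace (2 * q + 1 + 2)%nat with (2 * q + 3)%nat by lia.
  rewrite pow_add, pow_m1_even. ring.
Qed.

Lemma sqrt5_sq : sqrt 5 * sqrt 5 = 5.
Proof. apply sqrt_sqrt. lra. Qed.

Lemma sqrt5_pow_even t : sqrt 5 ^ (2 * t) = 5 ^ t.
Proof. rewrite pow_mult. f_equal. simpl. rewrite Rmult_1_r. apply sqrt5_sq. Qed.

Lemma alpha_minus_beta : alpha - beta = sqrt 5.
Proof. unfold alpha, beta. field. Qed.

Lemma alpha_mul_beta : alpha * beta = -1.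
Proof. unfold alpha, beta. pose proof sqrt5_sq. nra. Qed.

Lemma alpha_gt_1 : 1 < alpha.
Proof.
  unfold alpha. enough (2 < sqrt 5) by lra.
  rewrite <- (sqrt_square 2) by lra. apply sqrt_lt_1; lra.
Qed.

Lemma sqrt5_neq_0 : sqrt 5 <> 0.
Proof. apply Rgt_not_eq, sqrt_lt_R0. lra. Qed.

Lemma Fib_binet n : Fib n = (alpha ^ n - beta ^ n) / sqrt 5.
Proof. unfold Fib. now rewrite alpha_minus_beta. Qed.

Lemma sqrt5_Fib n : sqrt 5 * Fib n = alpha ^ n - beta ^ n.
Proof. rewrite Fib_binet. field. apply sqrt5_neq_0. Qed.

Lemma beta_pow_even n : Nat.Even n -> beta ^ n * alpha ^ n = 1.
Proof.
  intros [h ->]. rewrite <- Rpow_mult_distr, Rmult_comm, alpha_mul_beta. apply pow_m1_even.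
Qed.

Lemma alpha_pow_gt_1 n : (0 < n)%nat -> 1 < alpha ^ n.
Proof. intros. apply Rlt_pow_R1; auto using alpha_gt_1. Qed.

Ltac solve_nonzero :=
  repeat split;
  first [ assumption | apply sqrt5_neq_0 | apply pow_nonzero; solve_nonzero
        | apply not_0_INR; lia | lra ].

(* [field] cannot use [sqrt 5 * sqrt 5 = 5]; hiding [sqrt 5] behind [r] and writing every 5 as [r * r]
   turns these identities into rational-function identities in [r]. *)
Ltac field_fib :=
  rewrite ?pow_add;
  let r := fresh "r" in
  set (r := sqrt 5); replace 5 with (r * r) by apply sqrt5_sq;
  field; solve_nonzero.

Definition fib_ratio (n : nat) : R := sqrt 5 * Fib n / Luc n.

(* The summands of the finite sums in the theorem, re-indexed by t = m - j (or m - j - 1). *)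
Definition fib_coef (n t : nat) : R :=
  5 ^ (t + 1) / INR (2 * t + 2) * (Fib n ^ (2 * t + 2) / 2 ^ (2 * t + 2)) * Fib (n * (2 * t + 2)).

Definition luc_coef (n t : nat) : R :=
  5 ^ t / INR (2 * t + 1) * (Fib n ^ (2 * t + 1) / 2 ^ (2 * t + 1)) * Luc (n * (2 * t + 1)).

Section EvenIndex.

Variable n : nat.
Hypothesis n_even : Nat.Even n.
Hypothesis n_pos : (0 < n)%nat.

Lemma beta_pow_pos : 0 < beta ^ n < 1.
Proof. pose proof (beta_pow_even n n_even). pose proof (alpha_pow_gt_1 n n_pos). split; nra. Qed.

Lemma alpha_pow_inv : alpha ^ n = / beta ^ n.
Proof.
  pose proof beta_pow_pos. apply (Rmult_eq_reg_l (beta ^ n)); [|lra].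
  rewrite beta_pow_even, Rinv_r by (auto; lra). reflexivity.
Qed.

Lemma Luc_pos : 0 < Luc n.
Proof. pose proof beta_pow_pos. pose proof (alpha_pow_gt_1 n n_pos). unfold Luc. lra. Qed.

Lemma Fib_pos : 0 < Fib n.
Proof.
  pose proof beta_pow_pos. pose proof (alpha_pow_gt_1 n n_pos). pose proof (sqrt5_Fib n).
  assert (0 < sqrt 5) by (apply sqrt_lt_R0; lra). nra.
Qed.

Lemma fib_ratio_bounds : 0 < fib_ratio n < 1.
Proof.
  pose proof beta_pow_pos. pose proof (alpha_pow_gt_1 n n_pos).
  unfold fib_ratio, Luc. rewrite sqrt5_Fib. split; [apply Rdiv_lt_0_compat; lra|].
  apply (Rmult_lt_reg_r (alpha ^ n + beta ^ n)); [lra|]. field_simplify; lra.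
Qed.

Lemma binom_gf_fib_ratio s :
  binom_gf s (fib_ratio n) = (sqrt 5 * Fib n) ^ s * Luc n * alpha ^ (n * S s) / 2 ^ S s.
Proof.
  pose proof beta_pow_pos. pose proof Luc_pos.
  assert (E : 1 - fib_ratio n = 2 * beta ^ n / Luc n).
  { unfold fib_ratio. rewrite sqrt5_Fib. unfold Luc in *. field. lra. }
  unfold binom_gf. rewrite E. unfold fib_ratio. rewrite !Rpow_div_distr, pow_mult.
  rewrite alpha_pow_inv, pow_inv, <- !tech_pow_Rmult, !Rpow_mult_distr.
  field. solve_nonzero.
Qed.

Lemma binom_gf_opp_fib_ratio s :
  binom_gf s (- fib_ratio n) = (- (sqrt 5 * Fib n)) ^ s * Luc n * beta ^ (n * S s) / 2 ^ S s.
Proof.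
  pose proof beta_pow_pos. pose proof Luc_pos.
  assert (E : 1 - - fib_ratio n = 2 / (beta ^ n * Luc n)).
  { unfold fib_ratio. rewrite sqrt5_Fib, alpha_pow_inv. unfold Luc in *. rewrite alpha_pow_inv in *.
    field. split; [lra|]. intro. nra. }
  unfold binom_gf. rewrite E. unfold fib_ratio. rewrite <- Rdiv_opp_l, !Rpow_div_distr, pow_mult.
  rewrite <- !tech_pow_Rmult, !Rpow_mult_distr.
  field. solve_nonzero.
Qed.

Lemma binom_gf_even_fib_ratio_even t :
  binom_gf_even (2 * t) (fib_ratio n) = 5 ^ t * Fib n ^ (2 * t) * Luc n * Luc (n * (2 * t + 1)) / 2 ^ (2 * t + 2).
Proof.
  unfold binom_gf_even, Luc at 2.
  rewrite binom_gf_fib_ratio, binom_gf_opp_fib_ratio, pow_opp_even, Rpow_mult_distr, sqrt5_pow_even.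
  replace (S (2 * t)) with (2 * t + 1)%nat by lia. rewrite !(pow_add 2). field. apply pow_nonzero; lra.
Qed.

Lemma binom_gf_even_fib_ratio_odd t :
  binom_gf_even (2 * t + 1) (fib_ratio n) =
  5 ^ (t + 1) * Fib n ^ (2 * t + 1) * Luc n * Fib (n * (2 * t + 2)) / 2 ^ (2 * t + 3).
Proof.
  unfold binom_gf_even. rewrite binom_gf_fib_ratio, binom_gf_opp_fib_ratio, pow_opp_odd, Rpow_mult_distr.
  replace (S (2 * t + 1)) with (2 * t + 2)%nat by lia.
  replace (5 ^ (t + 1)) with (sqrt 5 ^ (2 * t + 1) * sqrt 5)
    by (rewrite <- sqrt5_pow_even, Rmult_comm, tech_pow_Rmult; f_equal; lia).
  rewrite (Fib_binet (n * _)), !(pow_add 2 (2 * t)).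
  field. split; [apply sqrt5_neq_0 | apply pow_nonzero; lra].
Qed.

Lemma binom_gf_odd_fib_ratio_odd t :
  binom_gf_odd (2 * t + 1) (fib_ratio n) =
  sqrt 5 * 5 ^ t * Fib n ^ (2 * t + 1) * Luc n * Luc (n * (2 * t + 2)) / 2 ^ (2 * t + 3).
Proof.
  unfold binom_gf_odd, Luc at 2. rewrite binom_gf_fib_ratio, binom_gf_opp_fib_ratio, pow_opp_odd, Rpow_mult_distr.
  replace (S (2 * t + 1)) with (2 * t + 2)%nat by lia.
  rewrite !(pow_add _ (2 * t)), sqrt5_pow_even. field. apply pow_nonzero; lra.
Qed.

Lemma binom_gf_odd_fib_ratio_even t :
  binom_gf_odd (2 * t) (fib_ratio n) = sqrt 5 * 5 ^ t * Fib n ^ (2 * t) * Luc n * Fib (n * (2 * t + 1)) / 2 ^ (2 * t + 2).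
Proof.
  unfold binom_gf_odd. rewrite binom_gf_fib_ratio, binom_gf_opp_fib_ratio, pow_opp_even, Rpow_mult_distr.
  replace (S (2 * t)) with (2 * t + 1)%nat by lia.
  rewrite (Fib_binet (n * _)), sqrt5_pow_even, !(pow_add 2).
  field. split; [apply sqrt5_neq_0 | apply pow_nonzero; lra].
Qed.

Lemma fib_coef_binom_gf_even t :
  Luc n / (4 * Fib n) * fib_coef n t = / 2 * (binom_gf_even (2 * t + 1) (fib_ratio n) / INR (2 * t + 2)).
Proof.
  pose proof Luc_pos. pose proof Fib_pos.
  unfold fib_coef. rewrite binom_gf_even_fib_ratio_odd. field_fib.
Qed.

Lemma luc_coef_binom_gf_even t :
  Luc n / (4 * Fib n) * luc_coef n t = / 2 * (binom_gf_even (2 * t) (fib_ratio n) / INR (2 * t + 1)).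
Proof.
  pose proof Luc_pos. pose proof Fib_pos.
  unfold luc_coef. rewrite binom_gf_even_fib_ratio_even. field_fib.
Qed.

Lemma alt_binom_gf_fib_ratio q :
  / 2 * alt_binom_gf q (fib_ratio n) =
  Luc n / (4 * Fib n) * sum_n_m (fib_coef n) 0 q - Luc n / (4 * Fib n) * sum_n_m (luc_coef n) 0 q.
Proof.
  unfold alt_binom_gf. induction q as [|q IH].
  - rewrite sum_O, !sum_n_n, fib_coef_binom_gf_even, luc_coef_binom_gf_even. ring.
  - rewrite sum_Sn, !sum_n_Sm by lia. change (plus ?a ?b) with (a + b).
    rewrite Rmult_plus_distr_l, IH, !Rmult_plus_distr_l, fib_coef_binom_gf_even, luc_coef_binom_gf_even. ring.
Qed.

Lemma atanh_fib_ratio : atanh (fib_ratio n) = INR n * ln alpha.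
Proof.
  pose proof beta_pow_pos. pose proof (alpha_pow_gt_1 n n_pos). pose proof alpha_gt_1.
  unfold atanh, fib_ratio, Luc. rewrite sqrt5_Fib.
  replace ((1 + (alpha ^ n - beta ^ n) / (alpha ^ n + beta ^ n)) / (1 - (alpha ^ n - beta ^ n) / (alpha ^ n + beta ^ n)))
    with (alpha ^ n * alpha ^ n) by (rewrite alpha_pow_inv in *; field; split; nra).
  rewrite ln_mult, ln_pow by (try apply pow_lt; lra). field.
Qed.

Lemma closed_terms_even q :
  / 2 * (fib_ratio n ^ 2 * binom_gf_even (2 * q + 1) (fib_ratio n) / INR (2 * q + 2)
         + fib_ratio n ^ 2 * binom_gf_even (2 * q) (fib_ratio n) / INR (2 * q + 1)
         - 2 * fib_ratio n * binom_gf_odd (2 * q + 1) (fib_ratio n) / INR (2 * q + 2)) =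
  - (5 ^ S q / INR (S q) * (Fib n ^ (2 * S q) / 2 ^ (2 * S q + 2)) * Luc (2 * n * S q))
  + 1 / Luc n * (5 ^ (S q + 1) / INR (S q)) * (Fib n ^ (2 * S q + 1) / 2 ^ (2 * S q + 3)) * Fib (2 * n * S q)
  + 1 / Luc n * (5 ^ S q / INR (2 * S q - 1)) * (Fib n ^ (2 * S q) / 2 ^ (2 * S q + 1)) * Luc (n * (2 * S q - 1)).
Proof.
  pose proof Luc_pos. pose proof Fib_pos.
  rewrite binom_gf_even_fib_ratio_odd, binom_gf_even_fib_ratio_even, binom_gf_odd_fib_ratio_odd.
  replace (2 * n * S q)%nat with (n * (2 * q + 2))%nat by lia.
  replace (2 * S q - 1)%nat with (2 * q + 1)%nat by lia.
  replace (2 * S q)%nat with (2 * q + 2)%nat by lia.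
  replace (S q + 1)%nat with (q + 2)%nat by lia.
  replace (S q) with (q + 1)%nat by lia.
  replace (INR (2 * q + 2)) with (2 * INR (q + 1)) by (rewrite !plus_INR, mult_INR; simpl; ring).
  unfold fib_ratio. rewrite !Rpow_div_distr, !Rpow_mult_distr. field_fib.
Qed.

Lemma closed_terms_odd q :
  / 2 * (fib_ratio n ^ 2 * binom_gf_even (2 * q + 2) (fib_ratio n) / INR (2 * q + 3)
         + fib_ratio n ^ 2 * binom_gf_even (2 * q + 1) (fib_ratio n) / INR (2 * q + 2)
         - 2 * fib_ratio n * binom_gf_odd (2 * q + 2) (fib_ratio n) / INR (2 * q + 3)) =
  - (5 ^ (S q + 1) / INR (2 * S q + 1) * (Fib n ^ (2 * S q + 1) / 2 ^ (2 * S q + 2)) * Fib (n * (2 * S q + 1)))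
  + 1 / Luc n * (5 ^ (S q + 1) / INR (2 * S q + 1)) * (Fib n ^ (2 * S q + 2) / 2 ^ (2 * S q + 3)) * Luc (n * (2 * S q + 1))
  + 1 / Luc n * (5 ^ (S q + 1) / INR (S q)) * (Fib n ^ (2 * S q + 1) / 2 ^ (2 * S q + 3)) * Fib (2 * S q * n).
Proof.
  pose proof Luc_pos. pose proof Fib_pos.
  replace (2 * q + 2)%nat with (2 * (q + 1))%nat by lia.
  rewrite binom_gf_even_fib_ratio_odd, binom_gf_even_fib_ratio_even, binom_gf_odd_fib_ratio_even.
  replace (2 * S q * n)%nat with (n * (2 * q + 2))%nat by lia.
  replace (2 * (q + 1) + 1)%nat with (2 * q + 3)%nat by lia.
  replace (2 * (q + 1) + 2)%nat with (2 * q + 4)%nat by lia.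
  replace (2 * S q + 1)%nat with (2 * q + 3)%nat by lia.
  replace (2 * S q + 2)%nat with (2 * q + 4)%nat by lia.
  replace (2 * S q + 3)%nat with (2 * q + 5)%nat by lia.
  replace (S q + 1)%nat with (q + 2)%nat by lia.
  replace (2 * (q + 1))%nat with (2 * q + 2)%nat by lia.
  replace (INR (2 * q + 2)) with (2 * INR (S q)) by (rewrite !plus_INR, mult_INR, S_INR; simpl; ring).
  unfold fib_ratio. rewrite !Rpow_div_distr, !Rpow_mult_distr. field_fib.
Qed.

Lemma atanh_term_fib_ratio :
  / 2 * (1 + (atanh (fib_ratio n) - fib_ratio n) / fib_ratio n) = INR n * Luc n / (2 * Fib n * sqrt 5) * ln alpha.
Proof.
  pose proof Luc_pos. pose proof Fib_pos. pose proof fib_ratio_bounds.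
  rewrite atanh_fib_ratio. unfold fib_ratio in *. field. solve_nonzero.
Qed.

Lemma term_eq_shifted_term r k : term n (r + 2) (S k) = shifted_term (fib_ratio n) r k.
Proof.
  pose proof Luc_pos.
  unfold term, shifted_term, fib_ratio.
  replace (2 * S k)%nat with (2 * k + 2)%nat by lia.
  replace (2 * INR (S k) - 1) with (INR (2 * k + 1)) by (rewrite S_INR, plus_INR, mult_INR; simpl; ring).
  replace (2 * INR (S k)) with (INR (2 * k + 2)) by (rewrite S_INR, plus_INR, mult_INR; simpl; ring).
  replace (INR (2 * k + 2) + 1) with (INR (2 * k + 3)) by (rewrite !plus_INR, mult_INR; simpl; ring).
  rewrite Rpow_div_distr, !Rpow_mult_distr.
  replace (sqrt 5 ^ (2 * k + 2)) with (5 ^ S k) by (rewrite <- sqrt5_pow_even; f_equal; lia).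
  field. solve_nonzero.
Qed.

End EvenIndex.

Theorem theorem18 (n m : nat) (hn : (0 < n)%nat) (hev : Nat.Even n) (hm : (0 < m)%nat) :
  is_series (fun k : nat => term n (2 * m) (S k))
    ( Luc n / (4 * Fib n) *
        sum_n_m (fun j : nat =>
          5 ^ (m - j) / INR (2 * m - 2 * j) * (Fib n ^ (2 * m - 2 * j) / 2 ^ (2 * m - 2 * j))
          * Fib (n * (2 * m - 2 * j))) 0 (m - 1)
    - Luc n / (4 * Fib n) *
        sum_n_m (fun j : nat =>
          5 ^ (m - j) / INR (2 * m - 2 * j + 1)
          * (Fib n ^ (2 * m - 2 * j + 1) / 2 ^ (2 * m - 2 * j + 1))
          * Luc (n * (2 * m - 2 * j + 1))) 1 m
    - 5 ^ m / INR m * (Fib n ^ (2 * m) / 2 ^ (2 * m + 2)) * Luc (2 * n * m)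
    + 1 / Luc n * (5 ^ (m + 1) / INR m) * (Fib n ^ (2 * m + 1) / 2 ^ (2 * m + 3)) * Fib (2 * n * m)
    + 1 / Luc n * (5 ^ m / INR (2 * m - 1)) * (Fib n ^ (2 * m) / 2 ^ (2 * m + 1)) * Luc (n * (2 * m - 1))
    + INR n * Luc n / (2 * Fib n * sqrt 5) * ln alpha )
  /\
  is_series (fun k : nat => term n (2 * m + 1) (S k))
    ( Luc n / (4 * Fib n) *
        sum_n_m (fun j : nat =>
          5 ^ (m - j) / INR (2 * m - 2 * j + 1)
          * (Fib n ^ (2 * m - 2 * j + 1) / 2 ^ (2 * m - 2 * j + 1))
          * Luc (n * (2 * m - 2 * j + 1))) 0 m
    - Luc n / (4 * Fib n) *
        sum_n_m (fun j : nat =>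
          5 ^ (m - j + 1) / INR (2 * m - 2 * j + 2)
          * (Fib n ^ (2 * m - 2 * j + 2) / 2 ^ (2 * m - 2 * j + 2))
          * Fib (n * (2 * m - 2 * j + 2))) 1 m
    - 5 ^ (m + 1) / INR (2 * m + 1) * (Fib n ^ (2 * m + 1) / 2 ^ (2 * m + 2)) * Fib (n * (2 * m + 1))
    + 1 / Luc n * (5 ^ (m + 1) / INR (2 * m + 1)) * (Fib n ^ (2 * m + 2) / 2 ^ (2 * m + 3)) * Luc (n * (2 * m + 1))
    + 1 / Luc n * (5 ^ (m + 1) / INR m) * (Fib n ^ (2 * m + 1) / 2 ^ (2 * m + 3)) * Fib (2 * m * n)
    - INR n * Luc n / (2 * Fib n * sqrt 5) * ln alpha ).
Proof.
  destruct m as [|q]; [lia|].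
  pose proof (fib_ratio_bounds n hev hn) as Hx.
  rewrite (sum_n_m_reindex _ (fib_coef n) 0 (S q - 1) q), (sum_n_m_reindex _ (luc_coef n) 1 (S q) q),
    (sum_n_m_reindex _ (luc_coef n) 0 (S q) (S q)), (sum_n_m_reindex _ (fib_coef n) 1 (S q) q)
    by (lia || (intros j Hj; unfold fib_coef, luc_coef;
                match goal with |- 5 ^ ?a / INR ?b * _ * _ = 5 ^ ?a' / INR ?b' * _ * _ =>
                  replace a with a' by lia; replace b with b' by lia; reflexivity end)).
  rewrite sum_n_Sm by lia. change (plus ?a ?b) with (a + b).
  assert (Hsums := alt_binom_gf_fib_ratio n hev hn q).
  assert (Hlog := atanh_term_fib_ratio n hev hn).
  split.
  - eapply is_series_ext_val; [| |exact (is_series_shifted_term_even q _ Hx)].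
    + intros k. rewrite <- (term_eq_shifted_term n hev hn). f_equal. lia.
    + pose proof (closed_terms_even n hev hn q). lra.
  - eapply is_series_ext_val; [| |exact (is_series_shifted_term_odd q _ Hx)].
    + intros k. rewrite <- (term_eq_shifted_term n hev hn). f_equal. lia.
    + pose proof (closed_terms_odd n hev hn q).
      pose proof (luc_coef_binom_gf_even n hev hn (S q)) as Hlast.
      replace (2 * S q)%nat with (2 * q + 2)%nat in Hlast by lia.
      replace (2 * q + 2 + 1)%nat with (2 * q + 3)%nat in Hlast by lia.
      lra.
Qed.
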